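(* Let $\mathcal{V}$ be a non-trivial quantale, $\mathsf{F}\colon\mathbf{Set}\to\mathbf{Set}$ a functor, and $\widehat{\mathsf{F}}$ a lax extension of $\mathsf{F}$ to $\mathbf{Rel}(\mathcal{V})$. Every predicate lifting for $\mathsf{F}$ induced by $\widehat{\mathsf{F}}$ is compatible with the lifting of $\mathsf{F}$ to $\mathbf{Cat}(\mathcal{V})$ induced by $\widehat{\mathsf{F}}$.
   Context: A quantale $(\mathcal{V},\otimes,k)$ is a complete lattice with commutative monoid structure, each $u\otimes-$ preserving joins, $\hom(u,-)$ its right adjoint; non-trivial: $\bot\ne\top$. $\mathcal{V}$-categories $(X,a)$: $k\le a(x,x)$, $a(x,y)\otimes a(y,z)\le a(x,z)$; $\mathcal{V}$-functors: $a(x,y)\le b(fx,fy)$. $\mathcal{V}$-relations $r\colon X\nrightarrow Y$ are maps $X\times Y\to\mathcal{V}$, composed by $(s\cdot r)(x,z)=\bigvee_y r(x,y)\otimes s(y,z)$, converse $r^\circ(y,x)=r(x,y)$, functions as relations with value $k$ on the graph and $\bot$ elsewhere. A lax extension of $\mathsf{F}$ assigns to each $r\colon X\nrightarrow Y$ a $\widehat{\mathsf{F}}r\colon\mathsf{F}X\nrightarrow\mathsf{F}Y$ with (L1) $r\le r'\Rightarrow\widehat{\mathsf{F}}r\le\widehat{\mathsf{F}}r'$, (L2) $\widehat{\mathsf{F}}s\cdot\widehat{\mathsf{F}}r\le\widehat{\mathsf{F}}(s\cdot r)$, (L3) $\mathsf{F}f\le\widehat{\mathsf{F}}f$, $(\mathsf{F}f)^\circ\le\widehat{\mathsf{F}}(f^\circ)$;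 its induced lifting sends $(X,a)$ to $(\mathsf{F}X,\widehat{\mathsf{F}}a)$. A $\kappa$-ary $\mathcal{V}$-valued predicate lifting is a natural transformation $\lambda\colon\mathbf{Set}(-,\mathcal{V}^\kappa)\to\mathbf{Set}(\mathsf{F}-,\mathcal{V})$, viewed (identifying $f\colon X\to\mathcal{V}^\kappa$ with the relation $(i,x)\mapsto f(x)(i)$ and maps $\mathsf{F}X\to\mathcal{V}$ with relations $1\nrightarrow\mathsf{F}X$) as mapping relations $\kappa\nrightarrow X$ to relations $1\nrightarrow\mathsf{F}X$. $\lambda$ is induced by $\widehat{\mathsf{F}}$ if there is $\mathfrak{r}\colon1\nrightarrow\mathsf{F}\kappa$ with $\lambda(f)=\widehat{\mathsf{F}}f\cdot\mathfrak{r}$ for every $\mathcal{V}$-relation $f\colon\kappa\nrightarrow X$. $\lambda$ is compatible with a lifting $\overline{\mathsf{F}}$ if for every $\mathcal{V}$-category $X$ and $\mathcal{V}$-functor $f\colon X\to\mathcal{V}^\kappa$ (with $[f,g]=\bigwedge_i\hom(f(i),g(i))$ on $\mathcal{V}^\kappa$), $\lambda_{|X|}(f)\colon\overline{\mathsf{F}}X\to(\mathcal{V},\hom)$ is a $\mathcal{V}$-functor. *)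

Set Implicit Arguments.
Unset Strict Implicit.

Record quantale := Quantale {
  qcar :> Type;
  qle : qcar -> qcar -> Prop;
  qle_refl : forall x, qle x x;
  qle_trans : forall x y z, qle x y -> qle y z -> qle x z;
  qle_antisym : forall x y, qle x y -> qle y x -> x = y;
  qjoin : (qcar -> Prop) -> qcar;
  qjoin_ub : forall (S : qcar -> Prop) x, S x -> qle x (qjoin S);
  qjoin_least : forall (S : qcar -> Prop) y, (forall x, S x -> qle x y) -> qle (qjoin S) y;
  qtens : qcar -> qcar -> qcar;
  qk : qcar;
  qtens_assoc : forall u v w, qtens u (qtens v w) = qtens (qtens u v) w;
  qtens_comm : forall u v, qtens u v = qtens v u;
  qtens_unit : forall u, qtens qk u = u;
  qtens_join : forall u (S : qcar -> Prop),
      qtens u (qjoin S) = qjoin (fun v => exists w, S w /\ v = qtens u w);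
  qhom : qcar -> qcar -> qcar;
  qhom_adj : forall u v w, qle (qtens u v) w <-> qle v (qhom u w)
}.

Arguments qle {q} _ _.
Arguments qjoin {q} _.
Arguments qtens {q} _ _.
Arguments qk {q}.
Arguments qhom {q} _ _.

Definition qmeet {V : quantale} (S : V -> Prop) : V :=
  qjoin (fun v => forall w, S w -> qle v w).
Definition qbot (V : quantale) : V := qjoin (fun _ => False).
Definition qtop (V : quantale) : V := qjoin (fun _ => True).

Record functor := Functor {
  Fob :> Type -> Type;
  Fmap : forall X Y : Type, (X -> Y) -> Fob X -> Fob Y;
  Fmap_id : forall (X : Type) (t : Fob X), Fmap (fun x : X => x) t = t;
  Fmap_comp : forall (X Y Z : Type) (f : X -> Y) (g : Y -> Z) (t : Fob X),
      Fmap (fun x => g (f x)) t = Fmap g (Fmap f t)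
}.
Arguments Fmap {f} {X Y} _ _ : rename.

Definition vrel (V : quantale) (X Y : Type) := X -> Y -> V.

Definition vrel_le {V : quantale} {X Y} (r r' : vrel V X Y) : Prop :=
  forall x y, qle (r x y) (r' x y).

(** composition  s · r  (first r, then s) *)
Definition vcomp {V : quantale} {X Y Z} (s : vrel V Y Z) (r : vrel V X Y) : vrel V X Z :=
  fun x z => qjoin (fun v => exists y, v = qtens (r x y) (s y z)).

Definition vconv {V : quantale} {X Y} (r : vrel V X Y) : vrel V Y X :=
  fun y x => r x y.

(** a function as a V-relation: k on its graph, ⊥ elsewhere *)
Definition vgraph (V : quantale) {X Y} (f : X -> Y) : vrel V X Y :=
  fun x y => qjoin (fun v => f x = y /\ v = qk).

Record lax_extension (V : quantale) (F : functor) := LaxExtension {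
  Fhat : forall X Y : Type, vrel V X Y -> vrel V (F X) (F Y);
  lax_mono : forall X Y (r r' : vrel V X Y), vrel_le r r' -> vrel_le (Fhat r) (Fhat r');
  lax_comp : forall X Y Z (r : vrel V X Y) (s : vrel V Y Z),
      vrel_le (vcomp (Fhat s) (Fhat r)) (Fhat (vcomp s r));
  lax_fun : forall X Y (f : X -> Y),
      vrel_le (vgraph V (Fmap (f := F) f)) (Fhat (vgraph V f));
  lax_funconv : forall X Y (f : X -> Y),
      vrel_le (vconv (vgraph V (Fmap (f := F) f))) (Fhat (vconv (vgraph V f)))
}.
Arguments Fhat {V F} _ {X Y} _ _ _.

Definition is_vcat {V : quantale} {X} (a : vrel V X X) : Prop :=
  (forall x, qle qk (a x x)) /\
  (forall x y z, qle (qtens (a x y) (a y z)) (a x z)).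

Definition is_vfunctor {V : quantale} {X Y} (a : vrel V X X) (b : vrel V Y Y)
  (f : X -> Y) : Prop :=
  forall x y, qle (a x y) (b (f x) (f y)).

(** the V-category structure [f,g] = ⋀_i hom(f i, g i) on V^κ *)
Definition powhom {V : quantale} {kappa : Type} (f g : kappa -> V) : V :=
  qmeet (fun v => exists i, v = qhom (f i) (g i)).

Definition pred_lifting_on (V : quantale) (F : functor) (kappa : Type) :=
  forall X : Type, (X -> kappa -> V) -> F X -> V.

Definition is_predicate_lifting {V : quantale} {F : functor} {kappa : Type}
  (lam : pred_lifting_on V F kappa) : Prop :=
  forall (X Y : Type) (g : X -> Y) (f : Y -> kappa -> V) (t : F X),
    lam X (fun x => f (g x)) t = lam Y f (Fmap g t).

(** f : X -> V^κ viewed as a relation κ ↛ X *)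
Definition rel_of {V : quantale} {X kappa : Type} (f : X -> kappa -> V) : vrel V kappa X :=
  fun i x => f x i.

Definition induced_by {V : quantale} {F : functor} (L : lax_extension V F)
  {kappa : Type} (lam : pred_lifting_on V F kappa) : Prop :=
  exists r : vrel V unit (F kappa),
    forall (X : Type) (f : X -> kappa -> V) (t : F X),
      lam X f t = vcomp (Fhat L (rel_of f)) r tt t.

(** compatibility with the lifting X ↦ (FX, Fhat a) of F to Cat(V) *)
Definition compatible {V : quantale} {F : functor} (L : lax_extension V F)
  {kappa : Type} (lam : pred_lifting_on V F kappa) : Prop :=
  forall (X : Type) (a : vrel V X X), is_vcat a ->
  forall f : X -> kappa -> V, is_vfunctor a powhom f ->
    is_vfunctor (Fhat L a) (fun u v : V => qhom u v) (lam X f).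

(** The lifting is [λ(f) = F̂(f°) · 𝔯], with [f°] the relation [κ ↛ X] read off
    [f].  A [V]-functor [f : (X, a) → V^κ] is exactly what makes [f°] absorb [a],
    [a · f° ≤ f°]; laxness of [F̂] transfers this to [F̂ a · F̂ f° ≤ F̂ f°]; and for
    any [m] absorbing [b] and any relation [r], each [y ↦ (m · r)(i, y)] is a
    [V]-functor [(Y, b) → (V, hom)]. *)

Section VRelations.
Variable V : quantale.

Lemma qle_tens_of_hom (u v w : V) : qle v (qhom u w) -> qle (qtens u v) w.
Proof. exact (proj2 (qhom_adj u v w)). Qed.

Lemma qle_hom_of_tens (u v w : V) : qle (qtens u v) w -> qle v (qhom u w).
Proof. exact (proj1 (qhom_adj u v w)). Qed.

Lemma qle_tens2l (u v w : V) : qle v w -> qle (qtens u v) (qtens u w).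
Proof.
  intro Hvw. apply qle_tens_of_hom.
  eapply qle_trans; [exact Hvw |]. apply qle_hom_of_tens, qle_refl.
Qed.

Lemma qmeet_lb (S : V -> Prop) (w : V) : S w -> qle (qmeet S) w.
Proof. intro Sw. apply qjoin_least. intros v Hv. exact (Hv w Sw). Qed.

Lemma powhom_le_hom {kappa : Type} (f g : kappa -> V) (i : kappa) :
  qle (powhom f g) (qhom (f i) (g i)).
Proof. apply qmeet_lb. exists i. reflexivity. Qed.

Lemma vcomp_ub {X Y Z} (s : vrel V Y Z) (r : vrel V X Y) x y z :
  qle (qtens (r x y) (s y z)) (vcomp s r x z).
Proof. apply qjoin_ub. exists y. reflexivity. Qed.

Lemma vcomp_least {X Y Z} (s : vrel V Y Z) (r : vrel V X Y) x z (w : V) :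
  (forall y, qle (qtens (r x y) (s y z)) w) -> qle (vcomp s r x z) w.
Proof. intro Hw. apply qjoin_least. intros v [y ->]. apply Hw. Qed.

Lemma vfunctor_powhom_rel_of_absorbs {X kappa} (a : vrel V X X) (f : X -> kappa -> V) :
  is_vfunctor a powhom f -> vrel_le (vcomp a (rel_of f)) (rel_of f).
Proof.
  intros Hf i y. apply vcomp_least. intro x. apply qle_tens_of_hom.
  eapply qle_trans; [apply Hf | exact (powhom_le_hom (f x) (f y) i)].
Qed.

Lemma vcomp_absorbing_vfunctor_hom {I K Y} (m : vrel V K Y) (b : vrel V Y Y)
  (r : vrel V I K) (i : I) :
  vrel_le (vcomp b m) m -> is_vfunctor b (fun u v : V => qhom u v) (vcomp m r i).
Proof.
  intros Hmod y z. apply qle_hom_of_tens. rewrite qtens_comm.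
  apply qle_tens_of_hom, vcomp_least. intro k. apply qle_hom_of_tens.
  rewrite qtens_comm, <- qtens_assoc.
  eapply qle_trans; [apply qle_tens2l | apply vcomp_ub].
  eapply qle_trans; [apply vcomp_ub | apply Hmod].
Qed.

End VRelations.

Lemma Fhat_absorbs {V : quantale} {F : functor} (L : lax_extension V F) {X Y}
  (m : vrel V X Y) (b : vrel V Y Y) :
  vrel_le (vcomp b m) m -> vrel_le (vcomp (Fhat L b) (Fhat L m)) (Fhat L m).
Proof.
  intros Hmod t s.
  eapply qle_trans; [apply lax_comp | exact (lax_mono L Hmod t s)].
Qed.

Theorem proposition6 (V : quantale) (Hnontriv : qbot V <> qtop V)
  (F : functor) (L : lax_extension V F)
  (kappa : Type) (lam : pred_lifting_on V F kappa)
  (Hlift : is_predicate_lifting lam) (Hind : induced_by L lam) :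
  compatible L lam.
Proof.
  destruct Hind as [r Hr].
  intros X a _ f Hf t s. rewrite !Hr.
  apply vcomp_absorbing_vfunctor_hom.
  apply Fhat_absorbs, vfunctor_powhom_rel_of_absorbs, Hf.
Qed.
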